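(* Let $n \geq 1$ and let $d_1, d_2, \ldots, d_n$ be positive integers. Then there exists a connected signed bipartite graph $G(U,V)$ whose signed degree set is $$S = \left\{ d_1,\ \sum_{i=1}^{2} d_i,\ \ldots,\ \sum_{i=1}^{n} d_i \right\}.$$
   Context: A signed bipartite graph $G(U,V)$ is a finite simple bipartite graph with bipartition $U, V$ (both nonempty, every edge joining a vertex of $U$ to a vertex of $V$) in which each edge is assigned a sign, positive or negative. The signed degree of a vertex $x$ is $\mathrm{sdeg}(x) = d^+(x) - d^-(x)$, where $d^+(x)$ (resp. $d^-(x)$) is the number of positive (resp. negative) edges incident with $x$. The signed degree set of $G(U,V)$ is the set of distinct signed degrees of its vertices. $G(U,V)$ is called connected if each vertex of $U$ is connected (by a path) to every vertex of $V$. *)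

From mathcomp Require Import all_boot all_order all_algebra.
Set Implicit Arguments. Unset Strict Implicit. Unset Printing Implicit Defensive.
Import Order.TTheory GRing.Theory Num.Theory.

(* A signed bipartite graph with parts U = 'I_p and V = 'I_q is given by
   e : 'I_p -> 'I_q -> option bool :
     e u v = None        : no edge between u and v,
     e u v = Some true   : a positive edge uv,
     e u v = Some false  : a negative edge uv.
   This encodes exactly the finite simple bipartite signed graphs
   (at most one edge between u and v, all edges between U and V). *)

Definition sgn_edge (o : option bool) : int :=
  match o with None => 0%R | Some true => 1%R | Some false => (-1)%R end.

Definition sdegU (p q : nat) (e : 'I_p -> 'I_q -> option bool) (u : 'I_p) : int :=
  (\sum_(v < q) sgn_edge (e u v))%R.
Definition sdegV (p q : nat) (e : 'I_p -> 'I_q -> option bool) (v : 'I_q) : int :=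
  (\sum_(u < p) sgn_edge (e u v))%R.

(* signed degree set (as a sequence; membership is what matters) *)
Definition sdeg_set (p q : nat) (e : 'I_p -> 'I_q -> option bool) : seq int :=
  [seq sdegU e u | u : 'I_p] ++ [seq sdegV e v | v : 'I_q].

Definition badj (p q : nat) (e : 'I_p -> 'I_q -> option bool) : rel ('I_p + 'I_q) :=
  fun x y => match x, y with
             | inl u, inr v => e u v != None
             | inr v, inl u => e u v != None
             | _, _ => false
             end.

Definition bconnected (p q : nat) (e : 'I_p -> 'I_q -> option bool) : Prop :=
  forall (u : 'I_p) (v : 'I_q), connect (badj e) (inl u) (inr v).

From mathcomp Require Import all_boot all_order all_algebra.
Import GRing.Theory.

(* Let s_k = d_1 + ... + d_k and t = s_1. Use n main labels and n - 1
   auxiliary ones. Every label gets a block of t vertices of U, joined by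
   positive edges to a block of vertices of V with the same label: s_k - 1 of
   them for the main label k, t + 1 for an auxiliary label. A hub in V is joined
   to all of U, positively on main blocks and negatively on auxiliary ones.
   Then a vertex of U has signed degree 1 + (s_k - 1) = s_k or
   -1 + (t + 1) = s_1, every other vertex of V has degree t, and the hub has
   degree n t - (n - 1) t = t; the hub also makes the graph connected. *)

Set Implicit Arguments.
Unset Strict Implicit.
Unset Printing Implicit Defensive.

Local Open Scope ring_scope.

Lemma sgn_edge_if (c : bool) : sgn_edge (if c then Some true else None) = c%:Z.
Proof. by case: c. Qed.

Lemma sum_nth_ord (V : nmodType) (T : Type) (x0 : T) (s : seq T) (F : T -> V) :
  \sum_(i < size s) F (nth x0 s i) = \sum_(x <- s) F x.
Proof. by rewrite (big_nth x0) big_mkord. Qed.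

Lemma sum_eq_count (T : eqType) (s : seq T) (x : T) :
  \sum_(y <- s) (y == x)%:Z = (count_mem x s)%:Z.
Proof. by elim: s => [|y s IH]; rewrite ?big_nil ?big_cons // IH PoszD. Qed.

Section HubGraph.
Variables (T : eqType) (x0 : T) (pos : pred T) (su sv : seq T).

(* U-vertex u has label nth x0 su u; V-vertex ord0 is the hub and V-vertex
   lift ord0 w has label nth x0 sv w. *)
Definition hub_graph (u : 'I_(size su)) (v : 'I_(size sv).+1) : option bool :=
  if unlift ord0 v is Some w then
    (if nth x0 sv w == nth x0 su u then Some true else None)
  else Some (pos (nth x0 su u)).

Lemma sdegU_hub_graph u :
  sdegU hub_graph u =
  sgn_edge (Some (pos (nth x0 su u))) + (count_mem (nth x0 su u) sv)%:Z.
Proof.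
rewrite /sdegU big_ord_recl /hub_graph unlift_none.
under eq_bigr => w _ do rewrite liftK sgn_edge_if.
by rewrite (sum_nth_ord x0 sv (fun y => (y == nth x0 su u)%:Z)) sum_eq_count.
Qed.

Lemma sdegV_hub_graph_hub :
  sdegV hub_graph ord0 = \sum_(x <- su) sgn_edge (Some (pos x)).
Proof.
rewrite /sdegV /hub_graph unlift_none.
exact: (sum_nth_ord x0 su (fun x => sgn_edge (Some (pos x)))).
Qed.

Lemma sdegV_hub_graph_lift w :
  sdegV hub_graph (lift ord0 w) = (count_mem (nth x0 sv w) su)%:Z.
Proof.
rewrite /sdegV /hub_graph liftK.
under eq_bigr => u _ do rewrite sgn_edge_if eq_sym.
by rewrite (sum_nth_ord x0 su (fun y => (y == nth x0 sv w)%:Z)) sum_eq_count.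
Qed.

Lemma hub_graph_connected : {subset sv <= su} -> bconnected hub_graph.
Proof.
move=> sv_su u v.
have to_hub u' : badj hub_graph (inl u') (inr ord0).
  by rewrite /badj /hub_graph unlift_none.
case: (unliftP ord0 v) => [w ->|->]; last exact: connect1.
have /(nthP x0)[i i_lt i_w] := sv_su _ (mem_nth x0 (ltn_ord w)).
pose u' : 'I_(size su) := Ordinal i_lt.
apply: connect_trans (connect1 (to_hub u)) _.
apply: connect_trans (connect1 (_ : badj _ (inr ord0) (inl u'))) (connect1 _).
  by rewrite /badj /hub_graph unlift_none.
by rewrite /badj /hub_graph liftK /= i_w eqxx.
Qed.

End HubGraph.

Section Blocks.
Variables (T : finType) (m : T -> nat).

Definition blocks : seq T := flatten [seq nseq (m x) x | x <- enum T].

Lemma sum_blocks (V : nmodType) (F : T -> V) :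
  \sum_(y <- blocks) F y = \sum_x F x *+ m x.
Proof.
rewrite big_flatten big_map enumT.
by apply: eq_bigr => x _; rewrite big_nseq iter_addr_0.
Qed.

Lemma count_mem_blocks x : count_mem x blocks = m x.
Proof.
apply/eqP; rewrite -eqz_nat -sum_eq_count sum_blocks (bigD1 x) //= eqxx.
by rewrite big1 ?addr0 ?natz // => y /negbTE ->; rewrite mul0rn.
Qed.

Lemma mem_blocks x : (x \in blocks) = (0 < m x)%N.
Proof. by rewrite -has_pred1 has_count count_mem_blocks. Qed.

End Blocks.

Lemma sdeg_setP p q (e : 'I_p -> 'I_q -> option bool) z :
  reflect ((exists u, z = sdegU e u) \/ (exists v, z = sdegV e v))
          (z \in sdeg_set e).
Proof.
rewrite mem_cat; apply: (iffP orP) => [[]/mapP[x _ ->]|[][x ->]].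
- by left; exists x.
- by right; exists x.
- by left; rewrite map_f ?mem_enum.
- by right; rewrite map_f ?mem_enum.
Qed.

Section Construction.
Variables (n : nat) (d : 'I_n.+1 -> nat).
Hypothesis d_gt0 : forall i, (0 < d i)%N.

Definition psum (k : 'I_n.+1) : nat := (\sum_(i < n.+1 | i <= k) d i)%N.

Lemma psum_gt0 k : (0 < psum k)%N.
Proof. by rewrite /psum (bigD1 ord0) //= ltn_addr. Qed.

Local Notation t := (psum ord0).

Definition label : finType := ('I_n.+1 + 'I_n)%type.

Definition label_psum (l : label) : nat := if l is inl k then psum k else t.

Definition block_sizeV (l : label) : nat :=
  if l is inl k then (psum k).-1 else t.+1.

Local Notation su := (blocks (fun _ : label => t)).
Local Notation sv := (blocks block_sizeV).

Definition psum_graph : 'I_(size su) -> 'I_(size sv).+1 -> option bool :=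
  @hub_graph _ (inl ord0) is_inl su sv.

Lemma mem_labelsU l : l \in su.
Proof. by rewrite mem_blocks psum_gt0. Qed.

Lemma sdegU_psum_graph u :
  sdegU psum_graph u = Posz (label_psum (nth (inl ord0) su u)).
Proof.
rewrite sdegU_hub_graph count_mem_blocks.
case: nth => [k|j] /=; first by rewrite -PoszD add1n prednK ?psum_gt0.
by rewrite -addn1 PoszD addrC addrK.
Qed.

Lemma sdegV_psum_graph v : sdegV psum_graph v = Posz t.
Proof.
case: (unliftP ord0 v) => [w ->|->].
  by rewrite sdegV_hub_graph_lift count_mem_blocks.
rewrite sdegV_hub_graph_hub sum_blocks big_sumType /= !sumr_const !card_ord.
by rewrite !mulNrn mulrSr addrAC subrr add0r natz.
Qed.

Lemma psum_graph_connected : bconnected psum_graph.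
Proof. by apply: hub_graph_connected => l _; apply: mem_labelsU. Qed.

End Construction.

Local Close Scope ring_scope.

Theorem theorem2p1 (n : nat) (d : 'I_n -> nat) :
  0 < n -> (forall i, 0 < d i) ->
  exists (p q : nat) (e : 'I_p -> 'I_q -> option bool),
    [/\ 0 < p, 0 < q, bconnected e &
        forall z : int, z \in sdeg_set e <->
          exists k : 'I_n, z = Posz (\sum_(i < n | i <= k) d i)%N].
Proof.
case: n d => [//|n] d _ d_gt0.
exists _, _, (@psum_graph n d); split => //.
- by rewrite -has_predT; apply/hasP; exists (inl ord0); rewrite ?mem_labelsU.
- exact: psum_graph_connected.
move=> z; split => [/sdeg_setP[][x ->] | [k ->]].
- by rewrite sdegU_psum_graph //; case: nth => [k|j]; [exists k | exists ord0].
- by rewrite sdegV_psum_graph; exists ord0.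
have [i i_lt i_k] := nthP (inl ord0) (mem_labelsU d_gt0 (inl k)).
apply/sdeg_setP; left.
by exists (Ordinal i_lt); rewrite sdegU_psum_graph //= i_k.
Qed.
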